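(* Let $S^0$ be an inverse semigroup with semilattice of idempotents $E^0$. Let $L$ be a left inverse semigroup and $R$ a right inverse semigroup and suppose that $S^0$ is a common quasi-ideal inverse transversal of $L$ and $R$; for $x$ in $L$ or $R$ let $x^0$ denote the unique inverse of $x$ lying in $S^0$. Let $R\times L\to S^0$ be a map denoted by $(a,x)\mapsto a\ast x$ and suppose that $\ast$ satisfies (1) for all $y,z\in L$, $a,b\in R$ with $y^0=b^0$, $(a\ast y)(b^0b)\ast z = a\ast (yy^0)(b\ast z)$; (2) if $a\in S^0$ or $x\in S^0$ then $a\ast x = ax$; (3) for all $e\in E(R)$, $f \in E(L)$, $e\ast f \in E^0$. Let $T = \{(x,a)\in L\times R : x^0 = a^0\}$ and define $(x,a)(y,b)=((xx^0)(a\ast y),(a\ast y)(b^0b))$. Then $T$ is a regular semigroup with a multiplicative inverse transversal $T^0$ with $T^0\cong S^0$. Moreover every regular semigroup with a multiplicative inverse transversal can be constructed (up to isomorphism) in this way.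
   Context: An inverse subsemigroup $S^0$ of a regular semigroup $S$ is an inverse transversal if each $x\in S$ has exactly one inverse $x^0$ in $S^0$; it is a quasi-ideal if $S^0SS^0\subseteq S^0$, and multiplicative if $\Lambda I\subseteq E^0$ where $I=\{xx^0:x\in S\}$ and $\Lambda=\{x^0x:x\in S\}$. A left (right) inverse semigroup is a regular semigroup whose idempotents form a left (right) regular band. *)

Set Implicit Arguments.

Section Generic.
Variables (X : Type) (op : X -> X -> X).

Definition full : X -> Prop := fun _ => True.

Definition closed_on (C : X -> Prop) : Prop :=
  forall x y, C x -> C y -> C (op x y).

Definition assoc_on (C : X -> Prop) : Prop :=
  forall x y z, C x -> C y -> C z -> op (op x y) z = op x (op y z).

Definition semigroup_on (C : X -> Prop) : Prop := closed_on C /\ assoc_on C.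

Definition inverse_of (x y : X) : Prop :=
  op (op x y) x = x /\ op (op y x) y = y.

Definition idem (e : X) : Prop := op e e = e.

Definition regular_on (C : X -> Prop) : Prop :=
  forall x, C x -> exists y, C y /\ op (op x y) x = x.

Definition inverse_sg_on (C : X -> Prop) : Prop :=
  semigroup_on C /\ forall x, C x -> exists! y, C y /\ inverse_of x y.

Definition inverse_transversal_on (C C0 : X -> Prop) : Prop :=
  (forall x, C0 x -> C x) /\ inverse_sg_on C0 /\
  forall x, C x -> exists! y, C0 y /\ inverse_of x y.

Definition quasi_ideal_on (C C0 : X -> Prop) : Prop :=
  forall a x b, C0 a -> C x -> C0 b -> C0 (op (op a x) b).

(** multiplicative : Lambda I is contained in E^0, where
    I = {x x^0}, Lambda = {x^0 x}, x^0 the inverse of x in C0 *)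
Definition multiplicative_on (C C0 : X -> Prop) : Prop :=
  forall x y x0 y0, C x -> C y -> C0 x0 -> C0 y0 ->
    inverse_of x x0 -> inverse_of y y0 ->
    C0 (op (op x0 x) (op y y0)) /\ idem (op (op x0 x) (op y y0)).

(** left / right inverse semigroups: regular semigroups whose idempotents form
    a left (resp. right) regular band *)
Definition left_inverse_sg : Prop :=
  semigroup_on full /\ regular_on full /\
  forall e f, idem e -> idem f -> idem (op e f) /\ op (op e f) e = op e f.

Definition right_inverse_sg : Prop :=
  semigroup_on full /\ regular_on full /\
  forall e f, idem e -> idem f -> idem (op e f) /\ op (op e f) e = op f e.

End Generic.

Definition img (A X : Type) (f : A -> X) : X -> Prop := fun x => exists a, f a = x.

Definition embedding (A X : Type) (opA : A -> A -> A) (opX : X -> X -> X)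
  (f : A -> X) : Prop :=
  (forall a b, f a = f b -> a = b) /\ (forall a b, f (opA a b) = opX (f a) (f b)).

Definition iso_onto (A X : Type) (opA : A -> A -> A) (opX : X -> X -> X)
  (C : X -> Prop) : Prop :=
  exists f : A -> X, embedding opA opX f /\ (forall a, C (f a)) /\
    (forall x, C x -> exists a, f a = x).

(** The data of the construction. S0 (type Z) is embedded in L via iL and in R
    via iR; zL x and zR a denote x^0 and a^0; star is the map R x L -> S0. *)
Definition construction_data (L R Z : Type)
  (opL : L -> L -> L) (opR : R -> R -> R) (opZ : Z -> Z -> Z)
  (iL : Z -> L) (iR : Z -> R) (zL : L -> Z) (zR : R -> Z)
  (star : R -> L -> Z) : Prop :=
  inverse_sg_on opZ (full (X:=Z)) /\
  left_inverse_sg opL /\ right_inverse_sg opR /\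
  embedding opZ opL iL /\ embedding opZ opR iR /\
  inverse_transversal_on opL (full (X:=L)) (img iL) /\
  quasi_ideal_on opL (full (X:=L)) (img iL) /\
  inverse_transversal_on opR (full (X:=R)) (img iR) /\
  quasi_ideal_on opR (full (X:=R)) (img iR) /\
  (forall x : L, inverse_of opL x (iL (zL x))) /\
  (forall a : R, inverse_of opR a (iR (zR a))) /\
  (forall (y z : L) (a b : R), zL y = zR b ->
     star (opR (iR (star a y)) (opR (iR (zR b)) b)) z =
     star a (opL (opL y (iL (zL y))) (iL (star b z)))) /\
  (forall (s : Z) (x : L), iL (star (iR s) x) = opL (iL s) x) /\
  (forall (a : R) (t : Z), iR (star a (iL t)) = opR a (iR t)) /\
  (forall (e : R) (f : L), idem opR e -> idem opL f -> idem opZ (star e f)).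

Definition Tset (L R Z : Type) (zL : L -> Z) (zR : R -> Z) : L * R -> Prop :=
  fun p => zL (fst p) = zR (snd p).

Definition Tmul (L R Z : Type) (opL : L -> L -> L) (opR : R -> R -> R)
  (iL : Z -> L) (iR : Z -> R) (zL : L -> Z) (zR : R -> Z)
  (star : R -> L -> Z) (p q : L * R) : L * R :=
  let (x, a) := p in let (y, b) := q in
  (opL (opL x (iL (zL x))) (iL (star a y)),
   opR (iR (star a y)) (opR (iR (zR b)) b)).

From Stdlib Require Import Setoid ClassicalEpsilon ProofIrrelevance.

(* In a regular semigroup [S] with multiplicative inverse transversal [S^0] put
   [lam x = x x^0 x^00] and [rho x = x^00 x^0 x]. Their images [L] and [R] are a
   left and a right inverse semigroup having [S^0] as common quasi-ideal inverse
   transversal; [x = lam x . x^0 . rho x], [lam (x y) = x lam y] and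
   [rho (x y) = rho x . y], so [x |-> (lam x, rho x)] maps [S] isomorphically onto
   the semigroup [T] built with [a * x = a x].
   Conversely, axiom (1) with one argument in [S^0] makes [*] an [S^0]-bimodule
   map ([(t a) * z = t (a * z)], [a * (y t) = (a * y) t]), which gives the
   associativity of [T]; [s |-> (s, s)] embeds [S^0] as the inverse transversal,
   [(s, s)] being an inverse of [(x, a)] exactly when [s = x^0], and axiom (3)
   makes it multiplicative. Every fact about [R] is the fact about [L] in the
   opposite semigroup. *)

Set Implicit Arguments.
Unset Strict Implicit.

(* Multiplies both sides of [H : a = b] on the right by a fresh [t] and
   re-associates to the right. *)
Ltac mul_right_in op asc H :=
  let H' := fresh H "t" in
  assert (H' := fun t => f_equal (fun z => op z t) H); cbv beta in H';
  repeat (setoid_rewrite asc in H').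

Record inverse_subsemigroup (X : Type) (op : X -> X -> X) (C : X -> Prop) (inv : X -> X)
  : Prop := {
  isg_mulA : forall x y z, op (op x y) z = op x (op y z);
  isg_mul_closed : forall x y, C x -> C y -> C (op x y);
  isg_inv_closed : forall x, C x -> C (inv x);
  isg_inv_l : forall x, C x -> op x (op (inv x) x) = x;
  isg_inv_r : forall x, C x -> op (inv x) (op x (inv x)) = inv x;
  isg_inv_uniq : forall x y, C x -> C y ->
    op x (op y x) = x -> op y (op x y) = y -> y = inv x }.

Section InverseSemigroup.
Variables (X : Type) (op : X -> X -> X) (C : X -> Prop) (inv : X -> X).
Hypothesis HC : inverse_subsemigroup op C inv.
Local Infix "**" := op (at level 40, left associativity).
Let asc := isg_mulA HC.
Let Ccl := isg_mul_closed HC.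
Let invC := isg_inv_closed HC.
Let invl := isg_inv_l HC.
Let invr := isg_inv_r HC.
Let invu := isg_inv_uniq HC.

Lemma inv_invol x : C x -> inv (inv x) = x.
Proof. intro Hx. symmetry. apply invu; auto. Qed.

Lemma inv_idem e : C e -> e ** e = e -> inv e = e.
Proof. intros He Hee. symmetry; apply invu; auto; rewrite Hee; auto. Qed.

(* The inverse [v] of [e f] is also inverted by [f v e], so [v = f v e] is idempotent. *)
Lemma idem_mul e f : C e -> C f -> e ** e = e -> f ** f = f -> (e ** f) ** (e ** f) = e ** f.
Proof.
  intros He Hf Hee Hff.
  set (u := e ** f). set (v := inv u). set (w := f ** (v ** e)).
  assert (Cu : C u) by (apply Ccl; auto).
  assert (Cv : C v) by (apply invC; auto).
  assert (Cw : C w) by (unfold w; repeat apply Ccl; auto).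
  assert (Hvuv := invr Cu). fold v in Hvuv. unfold u in Hvuv. rewrite !asc in Hvuv.
  mul_right_in op asc Hvuv. mul_right_in op asc Hee. mul_right_in op asc Hff.
  assert (Huvu := invl Cu). fold v in Huvu. unfold u in Huvu. rewrite !asc in Huvu.
  assert (Hw : w = v).
  { unfold v. apply invu; auto; unfold w, u; rewrite !asc.
    - rewrite Hfft, Heet. exact Huvu.
    - rewrite Heet, Hfft, Hvuvt. reflexivity. }
  assert (Hvv : v ** v = v).
  { rewrite <- Hw at 1 2. unfold w. rewrite !asc, Hvuvt. fold w. exact Hw. }
  assert (Hu : u = inv v) by (apply invu; auto; unfold u; rewrite !asc; assumption).
  assert (Hv : v = inv v) by (apply invu; auto; rewrite Hvv; auto).
  assert (Euv : u = v) by congruence.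
  rewrite Euv. exact Hvv.
Qed.

Lemma idem_comm e f : C e -> C f -> e ** e = e -> f ** f = f -> e ** f = f ** e.
Proof.
  intros He Hf Hee Hff.
  assert (I1 := idem_mul He Hf Hee Hff).
  assert (I2 := idem_mul Hf He Hff Hee).
  rewrite !asc in I1, I2. mul_right_in op asc Hee. mul_right_in op asc Hff.
  assert (A : f ** e = inv (e ** f)).
  { apply invu; auto; rewrite !asc.
    - rewrite Hfft, Heet. exact I1.
    - rewrite Heet, Hfft. exact I2. }
  rewrite A. symmetry. apply inv_idem; auto. apply idem_mul; auto.
Qed.

Lemma inv_l_assoc x t : C x -> x ** (inv x ** (x ** t)) = x ** t.
Proof. intro Hx. rewrite <- (asc (inv x)), <- asc, invl; auto. Qed.

Lemma inv_r_assoc x t : C x -> inv x ** (x ** (inv x ** t)) = inv x ** t.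
Proof. intro Hx. rewrite <- (asc x), <- asc, invr; auto. Qed.

Lemma idem_mul_inv_r x : C x -> (x ** inv x) ** (x ** inv x) = x ** inv x.
Proof. intro Hx. rewrite !asc, invr; auto. Qed.

Lemma idem_inv_mul_r x : C x -> (inv x ** x) ** (inv x ** x) = inv x ** x.
Proof. intro Hx. rewrite !asc, invl; auto. Qed.

Lemma idem_comm_assoc a b c d t : C (a ** b) -> C (c ** d) ->
  (a ** b) ** (a ** b) = a ** b -> (c ** d) ** (c ** d) = c ** d ->
  a ** (b ** (c ** (d ** t))) = c ** (d ** (a ** (b ** t))).
Proof.
  intros. transitivity (((a ** b) ** (c ** d)) ** t); [rewrite !asc; reflexivity |].
  rewrite (idem_comm H H0 H1 H2). rewrite !asc; reflexivity.
Qed.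

Lemma inv_mul x y : C x -> C y -> inv (x ** y) = inv y ** inv x.
Proof.
  intros Hx Hy. symmetry.
  assert (H1 := invl Hx). mul_right_in op asc H1.
  assert (H2 := invl Hy). mul_right_in op asc H2.
  assert (H3 := invr Hx). mul_right_in op asc H3.
  assert (H4 := invr Hy). mul_right_in op asc H4.
  apply invu; auto; rewrite !asc.
  - rewrite (idem_comm_assoc (a:=y) (b:=inv y) (c:=inv x) (d:=x)); auto using idem_mul_inv_r, idem_inv_mul_r.
    rewrite H1t, H2. reflexivity.
  - rewrite (idem_comm_assoc (a:=inv x) (b:=x) (c:=y) (d:=inv y)); auto using idem_mul_inv_r, idem_inv_mul_r.
    rewrite H4t, H3. reflexivity.
Qed.
End InverseSemigroup.
Arguments idem_comm_assoc {X op C inv} HC a b c d t.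

(* [o x] stands for x^0. The axioms are stated with products associated to the right. *)
Record mult_inverse_transversal (S : Type) (op : S -> S -> S) (S0 : S -> Prop) (o : S -> S)
  : Prop := {
  mit_mulA : forall x y z, op (op x y) z = op x (op y z);
  mit_mul_closed : forall x y, S0 x -> S0 y -> S0 (op x y);
  mit_o_tr : forall x, S0 (o x);
  mit_o_l : forall x, op x (op (o x) x) = x;
  mit_o_r : forall x, op (o x) (op x (o x)) = o x;
  mit_o_uniq : forall x y, S0 y -> op x (op y x) = x -> op y (op x y) = y -> y = o x;
  mit_mult_tr : forall x y, S0 (op (o x) (op x (op y (o y))));
  mit_mult_idem : forall x y,
    op (op (o x) (op x (op y (o y)))) (op (o x) (op x (op y (o y))))
    = op (o x) (op x (op y (o y)))  }.

Section MultInverseTransversal.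
Variables (S : Type) (op : S -> S -> S) (S0 : S -> Prop) (o : S -> S).
Hypothesis H : mult_inverse_transversal op S0 o.

Lemma mit_inverse_subsemigroup : inverse_subsemigroup op S0 o.
Proof. destruct H; split; auto. Qed.

Lemma mit_dual : mult_inverse_transversal (fun x y => op y x) S0 o.
Proof.
  destruct H as [asc S0cl oS0 ol or ou mult multi].
  split; intros; rewrite ?asc; auto.
  - rewrite asc in *. apply ou; auto.
  - specialize (multi y x). rewrite !asc in multi. exact multi.
Qed.
End MultInverseTransversal.

Section Lambda.
Variables (S : Type) (op : S -> S -> S) (S0 : S -> Prop) (o : S -> S).
Hypothesis H : mult_inverse_transversal op S0 o.
Local Infix "**" := op (at level 40, left associativity).
Let asc := mit_mulA H.
Let S0cl := mit_mul_closed H.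
Let oS0 := mit_o_tr H.
Let ol := mit_o_l H.
Let or := mit_o_r H.
Let ou := mit_o_uniq H.
Let mult := mit_mult_tr H.
Let multi := mit_mult_idem H.
Let HS := mit_inverse_subsemigroup H.

(* The fixed points of [lam] and [rho] are the semigroups [L = I S^0] and
   [R = S^0 Lambda] of the paper. *)
Definition lam x := x ** (o x ** o (o x)).
Definition rho x := o (o x) ** (o x ** x).

Lemma o_l_assoc x t : x ** (o x ** (x ** t)) = x ** t.
Proof. rewrite <- (asc (o x)), <- asc, ol. reflexivity. Qed.

Lemma o_r_assoc x t : o x ** (x ** (o x ** t)) = o x ** t.
Proof. rewrite <- (asc x), <- asc, or. reflexivity. Qed.

Lemma o_idem e : e ** e = e -> o e ** o e = o e.
Proof.
  intro He.
  assert (E : o e = o e ** (e ** (e ** o e))) by (rewrite <- (asc e e), He, or; reflexivity).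
  rewrite E. apply multi.
Qed.

Lemma o_o_idem e : e ** e = e -> o (o e) = o e.
Proof. intro He. apply (inv_idem HS); auto. apply o_idem; auto. Qed.

Lemma o_mul_l x y : o (x ** y) = o (o x ** (x ** y)) ** o x.
Proof.
  set (u := o x ** (x ** y)). symmetry. apply ou.
  - apply S0cl; auto.
  - transitivity (x ** (u ** (o u ** u))).
    + unfold u. rewrite !asc, o_l_assoc. reflexivity.
    + rewrite ol. unfold u. apply o_l_assoc.
  - transitivity (o u ** (u ** (o u ** o x))).
    + unfold u. rewrite !asc. reflexivity.
    + apply o_r_assoc.
Qed.

Lemma o_mul_r x y : o (x ** y) = o y ** o (x ** (y ** o y)).
Proof.
  set (v := x ** (y ** o y)). symmetry. apply ou.
  - apply S0cl; auto.
  - transitivity (v ** (o v ** (v ** y))).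
    + unfold v. rewrite !asc, (ol y). reflexivity.
    + rewrite o_l_assoc. unfold v. rewrite !asc, ol. reflexivity.
  - transitivity (o y ** (o v ** (v ** o v))).
    + unfold v. rewrite !asc. reflexivity.
    + rewrite or. reflexivity.
Qed.

(* The middle factor [x^0 x y y^0] is an idempotent of [S^0], hence self-inverse. *)
Lemma o_mul x y : o (x ** y) = o y ** (o x ** (x ** (y ** (o y ** o x)))).
Proof.
  rewrite o_mul_l.
  replace (o x ** (x ** y)) with ((o x ** x) ** y) by apply asc.
  rewrite o_mul_r, !asc, (inv_idem HS (mult x y) (multi x y)).
  rewrite !asc. reflexivity.
Qed.

Lemma tr_mul_idem_oo s z : S0 s -> s ** (z ** o z) = s ** (o (o z) ** o z).
Proof.
  intro Hs.
  set (D := o s ** (s ** (z ** o z))).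
  set (D' := o s ** (s ** (o (o z) ** o z))).
  assert (SD : S0 D) by apply mult.
  assert (ID : D ** D = D) by apply multi.
  assert (SF : S0 (o s ** s)) by auto.
  assert (IF : (o s ** s) ** (o s ** s) = o s ** s) by apply (idem_inv_mul_r HS Hs).
  assert (Sk : S0 (o (o z) ** o z)) by auto.
  assert (Ik : (o (o z) ** o z) ** (o (o z) ** o z) = o (o z) ** o z)
    by apply (idem_inv_mul_r HS (oS0 z)).
  assert (SD' : S0 D') by (unfold D'; rewrite <- asc; auto).
  assert (ID' : D' ** D' = D').
  { unfold D'. rewrite !asc, (idem_comm_assoc HS (o (o z)) (o z) (o s) s); auto.
    rewrite o_l_assoc, (ol (o z)). reflexivity. }
  assert (DF : D ** (o s ** s) = D).
  { rewrite (idem_comm HS SD SF ID IF). unfold D. rewrite !asc, o_l_assoc. reflexivity. }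
  assert (DD' : D ** D' = D).
  { transitivity ((D ** (o s ** s)) ** (o (o z) ** o z)); [unfold D'; rewrite !asc; reflexivity |].
    rewrite DF. unfold D. rewrite !asc, (ol (o z)). reflexivity. }
  assert (D'D : D' ** D = D').
  { unfold D, D'. rewrite !asc, (idem_comm_assoc HS (o (o z)) (o z) (o s) s); auto.
    rewrite o_l_assoc, (or z). reflexivity. }
  assert (E : D = D') by (rewrite <- DD', (idem_comm HS SD SD' ID ID'); auto).
  transitivity (s ** D); [unfold D; rewrite o_l_assoc; reflexivity |].
  rewrite E. unfold D'. rewrite o_l_assoc. reflexivity.
Qed.

Lemma tr_mul_lam_fixed s z : S0 s -> lam z = z -> s ** z = s ** o (o z).
Proof.
  intros Hs Hz. rewrite <- Hz at 1. unfold lam.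
  rewrite <- (asc z), <- asc, tr_mul_idem_oo, !asc, (or (o z)); auto.
Qed.

Lemma o_mul_lam_fixed l : lam l = l -> o l ** l = o l ** o (o l).
Proof. intro Hl. rewrite <- Hl at 2. unfold lam. apply o_r_assoc. Qed.

Lemma lam_fixed_mul l m : lam l = l -> lam m = m -> l ** m = l ** o (o m).
Proof.
  intros Hl Hm. rewrite <- Hl at 1. unfold lam. rewrite !asc.
  rewrite <- (asc (o l)), (tr_mul_lam_fixed (S0cl (oS0 l) (oS0 (o l))) Hm), !asc.
  transitivity (lam l ** o (o m)); [unfold lam; rewrite !asc; reflexivity |].
  rewrite Hl. reflexivity.
Qed.

Lemma lam_tr s : S0 s -> lam s = s.
Proof. intro Hs. unfold lam. rewrite (inv_invol HS Hs). apply ol. Qed.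

Lemma o_lam x : o (lam x) = o x.
Proof.
  symmetry. apply ou; auto; unfold lam; rewrite !asc.
  - rewrite (o_l_assoc (o x)), o_l_assoc. reflexivity.
  - rewrite o_r_assoc, (ol (o x)). reflexivity.
Qed.

Lemma lam_idem x : lam (lam x) = lam x.
Proof.
  unfold lam at 1. rewrite o_lam. unfold lam. rewrite !asc, (o_l_assoc (o x)). reflexivity.
Qed.

Lemma lam_mul x y : lam (x ** y) = x ** lam y.
Proof.
  unfold lam at 1. rewrite o_mul.
  set (E := o x ** (x ** (y ** o y))).
  assert (SE : S0 E) by apply mult.
  assert (IE : E ** E = E) by apply multi.
  replace (o y ** (o x ** (x ** (y ** (o y ** o x))))) with (o y ** (E ** o x))
    by (unfold E; rewrite !asc; reflexivity).
  rewrite (inv_mul HS (oS0 y) (S0cl SE (oS0 x))), (inv_mul HS SE (oS0 x)), (inv_idem HS SE IE).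
  assert (H1 : E ** (o x ** (o (o x) ** (E ** o (o y)))) = E ** o (o y)).
  { assert (P : (o x ** o (o x)) ** E = E)
      by (unfold E; rewrite !asc, (o_l_assoc (o x)); reflexivity).
    transitivity (E ** (((o x ** o (o x)) ** E) ** o (o y))); [rewrite !asc; reflexivity |].
    rewrite P, <- asc, IE. reflexivity. }
  transitivity (x ** (y ** (o y ** (E ** (o x ** (o (o x) ** (E ** o (o y))))))));
    [rewrite !asc; reflexivity |].
  rewrite H1. unfold E. rewrite !asc, <- (o_l_assoc x (y ** _)).
  assert (H2 := multi x y). rewrite !asc in H2. mul_right_in op asc H2.
  rewrite H2t, o_l_assoc. reflexivity.
Qed.

Lemma lam_fixed_mul_closed l m : lam l = l -> lam m = m -> lam (l ** m) = l ** m.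
Proof. intros _ Hm. rewrite lam_mul, Hm. reflexivity. Qed.

Lemma rho_lam_fixed_tr a x : rho a = a -> lam x = x -> S0 (a ** x).
Proof.
  intros Ha Hx. rewrite <- Ha, <- Hx. unfold rho, lam. rewrite !asc.
  replace (o (o a) ** (o a ** (a ** (x ** (o x ** o (o x))))))
    with (o (o a) ** ((o a ** (a ** (x ** o x))) ** o (o x))) by (rewrite !asc; reflexivity).
  auto.
Qed.

Lemma lam_o_rho x : x = lam x ** (o x ** rho x).
Proof. unfold lam, rho. rewrite !asc, (o_l_assoc (o x)), (o_l_assoc (o x)), ol. reflexivity. Qed.

Lemma lam_mul_decomp x y : lam x ** (o (lam x) ** (rho x ** lam y)) = lam (x ** y).
Proof.
  rewrite o_lam, lam_mul. unfold lam, rho. rewrite !asc.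
  rewrite (o_l_assoc (o x)), (o_l_assoc (o x)), o_l_assoc. reflexivity.
Qed.

Lemma idem_lam_fixed f : lam f = f -> f ** f = f -> f = f ** o f.
Proof.
  intros Hf Hff. rewrite <- Hf at 1. unfold lam.
  rewrite (o_o_idem Hff), (o_idem Hff). reflexivity.
Qed.

Lemma idem_lam_fixed_left_regular l m : lam l = l -> lam m = m -> l ** l = l -> m ** m = m ->
  (l ** m) ** (l ** m) = l ** m /\ (l ** m) ** l = l ** m.
Proof.
  intros Hl Hm Hll Hmm.
  assert (El := idem_lam_fixed Hl Hll).
  assert (Iol := o_idem Hll).
  assert (Iom := o_idem Hmm).
  assert (Hlm : l ** m = l ** o m) by (rewrite (lam_fixed_mul Hl Hm), o_o_idem; auto).
  assert (Hml : o m ** l = o m ** o l) by (rewrite (tr_mul_lam_fixed (oS0 m) Hl), o_o_idem; auto).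
  assert (C := idem_comm HS (oS0 m) (oS0 l) Iom Iol).
  assert (Ct : forall t, o m ** (o l ** t) = o l ** (o m ** t))
    by (intro; rewrite <- !asc, C; reflexivity).
  assert (Hmlt : forall t, o m ** (l ** t) = o m ** (o l ** t))
    by (intro; rewrite <- !asc, Hml; reflexivity).
  assert (Elt : forall t, l ** (o l ** t) = l ** t) by (intro; rewrite <- asc, <- El; reflexivity).
  rewrite Hlm, !asc. split.
  - rewrite Hmlt, Ct, Elt, Iom. reflexivity.
  - rewrite Hml, C, Elt. reflexivity.
Qed.
End Lambda.

Section Rho.
Variables (S : Type) (op : S -> S -> S) (S0 : S -> Prop) (o : S -> S).
Hypothesis H : mult_inverse_transversal op S0 o.
Local Infix "**" := op (at level 40, left associativity).
Local Notation op' := (fun x y => op y x).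
Let H' := mit_dual H.
Let asc := mit_mulA H.

Lemma rho_dual x : rho op o x = lam op' o x.
Proof. unfold rho, lam. rewrite asc. reflexivity. Qed.

Lemma lam_dual x : lam op o x = rho op' o x.
Proof. unfold rho, lam. rewrite asc. reflexivity. Qed.

Lemma o_rho x : o (rho op o x) = o x.
Proof. rewrite rho_dual. exact (o_lam H' x). Qed.

Lemma rho_idem x : rho op o (rho op o x) = rho op o x.
Proof. rewrite !rho_dual. exact (lam_idem H' x). Qed.

Lemma rho_tr s : S0 s -> rho op o s = s.
Proof. intro Hs. rewrite rho_dual. exact (lam_tr H' Hs). Qed.

Lemma rho_mul x y : rho op o (x ** y) = rho op o x ** y.
Proof. rewrite !rho_dual. exact (lam_mul H' y x). Qed.

Lemma rho_fixed_mul_closed a b : rho op o a = a -> rho op o b = b -> rho op o (a ** b) = a ** b.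
Proof. intros Ha _. rewrite rho_mul, Ha. reflexivity. Qed.

Lemma rho_fixed_mul_tr s z : S0 s -> rho op o z = z -> z ** s = o (o z) ** s.
Proof. intros Hs Hz. rewrite rho_dual in Hz. exact (tr_mul_lam_fixed H' Hs Hz). Qed.

Lemma rho_fixed_mul_o r : rho op o r = r -> r ** o r = o (o r) ** o r.
Proof. rewrite rho_dual. exact (o_mul_lam_fixed H' (l:=r)). Qed.

Lemma rho_mul_decomp x y :
  (rho op o x ** lam op o y) ** (o (rho op o y) ** rho op o y) = rho op o (x ** y).
Proof.
  rewrite !rho_dual, lam_dual, <- (lam_mul_decomp H' y x), !asc. reflexivity.
Qed.

Lemma idem_rho_fixed e : rho op o e = e -> e ** e = e -> e = o e ** e.
Proof. intros He Hee. rewrite rho_dual in He. exact (idem_lam_fixed H' He Hee). Qed.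

Lemma idem_rho_fixed_right_regular a b :
  rho op o a = a -> rho op o b = b -> a ** a = a -> b ** b = b ->
  (a ** b) ** (a ** b) = a ** b /\ (a ** b) ** a = b ** a.
Proof.
  rewrite !rho_dual. intros Ha Hb Haa Hbb. split.
  - exact (proj1 (idem_lam_fixed_left_regular H' Hb Ha Hbb Haa)).
  - rewrite asc. exact (proj2 (idem_lam_fixed_left_regular H' Ha Hb Haa Hbb)).
Qed.
End Rho.

Lemma sig_eq (A : Type) (P : A -> Prop) (p q : {x : A | P x}) :
  proj1_sig p = proj1_sig q -> p = q.
Proof. apply eq_sig_hprop. intros; apply proof_irrelevance. Qed.

Section Construction.
Variables (S : Type) (op : S -> S -> S) (S0 : S -> Prop) (o : S -> S).
Hypothesis H : mult_inverse_transversal op S0 o.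
Local Infix "**" := op (at level 40, left associativity).
Let asc := mit_mulA H.
Let S0cl := mit_mul_closed H.
Let oS0 := mit_o_tr H.
Let ol := mit_o_l H.
Let or := mit_o_r H.
Let ou := mit_o_uniq H.
Let mult := mit_mult_tr H.
Let multi := mit_mult_idem H.

Lemma idem_rho_lam_mul e f : rho op o e = e -> e ** e = e -> lam op o f = f -> f ** f = f ->
  S0 (e ** f) /\ (e ** f) ** (e ** f) = e ** f.
Proof.
  intros He Hee Hf Hff.
  rewrite (idem_rho_fixed H He Hee), (idem_lam_fixed H Hf Hff), !asc.
  split; [apply mult |]. assert (E := multi e f). rewrite !asc in E. exact E.
Qed.

(* Every pair in [L x R] with matching inverses comes from [l l^0 r]. *)
Lemma lam_rho_mul_o l r : lam op o l = l -> rho op o r = r -> o l = o r ->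
  lam op o (l ** (o l ** r)) = l /\ rho op o (l ** (o l ** r)) = r.
Proof.
  intros Hl Hr Hlr.
  set (g := o l).
  assert (Hgl : forall t, g ** (l ** t) = g ** (o g ** t)).
  { intro t. unfold g. rewrite <- asc, (o_mul_lam_fixed H Hl), asc. reflexivity. }
  assert (Hrg0 : r ** g = o g ** g) by (unfold g; rewrite Hlr; exact (rho_fixed_mul_o H Hr)).
  assert (Hrg : forall t, r ** (g ** t) = o g ** (g ** t))
    by (intro t; rewrite <- !asc, Hrg0; reflexivity).
  assert (Hox : o (l ** (g ** r)) = g).
  { symmetry. apply ou; [unfold g; auto | |]; rewrite !asc.
    - rewrite Hrg, (o_l_assoc H), Hgl, (o_l_assoc H). reflexivity.
    - rewrite Hgl, (o_l_assoc H), Hrg0. apply ol. }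
  split.
  - unfold lam at 1. rewrite Hox, !asc, Hrg, (or g). exact Hl.
  - unfold rho at 1. rewrite Hox, Hgl, (o_r_assoc H g).
    rewrite <- Hr at 2. unfold rho. rewrite <- Hlr. reflexivity.
Qed.

Definition Ztr := {s : S | S0 s}.
Definition mulZ (p q : Ztr) : Ztr :=
  exist _ (proj1_sig p ** proj1_sig q) (S0cl (proj2_sig p) (proj2_sig q)).

Lemma mulZ_inverse_semigroup : inverse_sg_on mulZ (full (X:=Ztr)).
Proof.
  split; [split |].
  - intros x y _ _; exact I.
  - intros x y z _ _ _; apply sig_eq, asc.
  - intros x _. exists (exist _ (o (proj1_sig x)) (oS0 _)). split.
    + split; [exact I | split; apply sig_eq; simpl; rewrite asc; auto].
    + intros y [_ [H1 H2]]. apply (f_equal (@proj1_sig _ _)) in H1, H2. simpl in H1, H2.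
      apply sig_eq; simpl. symmetry.
      apply ou; [exact (proj2_sig y) | rewrite <- asc; auto ..].
Qed.

Section Sub.
Variable P : S -> Prop.
Hypothesis P_mul : forall x y, P x -> P y -> P (x ** y).
Hypothesis P_tr : forall s, S0 s -> P s.

Definition subP := {x : S | P x}.
Definition mulP (p q : subP) : subP :=
  exist _ (proj1_sig p ** proj1_sig q) (P_mul (proj2_sig p) (proj2_sig q)).
Definition inP (s : Ztr) : subP := exist _ (proj1_sig s) (P_tr (proj2_sig s)).
Definition oP (p : subP) : Ztr := exist _ (o (proj1_sig p)) (oS0 _).

Lemma inP_embedding : embedding mulZ mulP inP.
Proof.
  split.
  - intros a b E. apply (f_equal (@proj1_sig _ _)) in E. apply sig_eq. exact E.
  - intros a b. apply sig_eq. reflexivity.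
Qed.

Lemma oP_inverse x : inverse_of mulP x (inP (oP x)).
Proof. split; apply sig_eq; simpl; rewrite asc; auto. Qed.

Lemma mulP_regular_semigroup :
  semigroup_on mulP (full (X:=subP)) /\ regular_on mulP (full (X:=subP)).
Proof.
  split; [split |].
  - intros x y _ _; exact I.
  - intros x y z _ _ _; apply sig_eq, asc.
  - intros x _. exists (inP (oP x)). split; [exact I | apply oP_inverse].
Qed.

Lemma oP_uniq x y : inverse_of mulP x (inP y) -> y = oP x.
Proof.
  intros [H1 H2]. apply (f_equal (@proj1_sig _ _)) in H1, H2. simpl in H1, H2.
  apply sig_eq; simpl. apply ou; [exact (proj2_sig y) | rewrite <- asc; auto ..].
Qed.

Lemma inP_inverse_transversal : inverse_transversal_on mulP (full (X:=subP)) (img inP).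
Proof.
  assert (U : forall x, exists! y, img inP y /\ inverse_of mulP x y).
  { intros x. exists (inP (oP x)). split.
    - split; [exists (oP x); reflexivity | apply oP_inverse].
    - intros y [[b <-] Hinv]. f_equal. symmetry. apply oP_uniq. exact Hinv. }
  split; [intros; exact I | split; [split; [split |] |]].
  - intros x y [a <-] [b <-]. exists (mulZ a b). apply sig_eq. reflexivity.
  - intros x y z _ _ _; apply sig_eq, asc.
  - intros x _. apply U.
  - intros x _. apply U.
Qed.

Lemma inP_quasi_ideal : (forall s x t, S0 s -> P x -> S0 t -> S0 (s ** x ** t)) ->
  quasi_ideal_on mulP (full (X:=subP)) (img inP).
Proof.
  intros Pq a x b [s <-] _ [t <-].
  exists (exist _ _ (Pq _ _ _ (proj2_sig s) (proj2_sig x) (proj2_sig t))).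
  apply sig_eq. reflexivity.
Qed.
End Sub.

Definition Lfix := subP (fun x => lam op o x = x).
Definition mulL : Lfix -> Lfix -> Lfix := mulP (lam_fixed_mul_closed H).
Definition inL : Ztr -> Lfix := inP (lam_tr H).
Definition oL : Lfix -> Ztr := oP (P := fun x => lam op o x = x).
Definition Rfix := subP (fun x => rho op o x = x).
Definition mulR : Rfix -> Rfix -> Rfix := mulP (rho_fixed_mul_closed H).
Definition inR : Ztr -> Rfix := inP (rho_tr H).
Definition oR : Rfix -> Ztr := oP (P := fun x => rho op o x = x).
Definition sandwich (a : Rfix) (x : Lfix) : Ztr :=
  exist _ (proj1_sig a ** proj1_sig x) (rho_lam_fixed_tr H (proj2_sig a) (proj2_sig x)).
Definition lam_rho (x : S) : Lfix * Rfix :=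
  (exist _ (lam op o x) (lam_idem H x), exist _ (rho op o x) (rho_idem H x)).

Lemma construction_data_of_mit : construction_data mulL mulR mulZ inL inR oL oR sandwich.
Proof.
  assert (val_idem : forall (P : S -> Prop) Pm (e : subP P), idem (mulP Pm) e ->
            proj1_sig e ** proj1_sig e = proj1_sig e)
    by (intros P Pm e He; exact (f_equal (@proj1_sig _ _) He)).
  split; [exact mulZ_inverse_semigroup |].
  split.
  { split; [| split]; [apply (mulP_regular_semigroup _ (lam_tr H)) .. |].
    intros e f He%val_idem Hf%val_idem.
    destruct (idem_lam_fixed_left_regular H (proj2_sig e) (proj2_sig f) He Hf).
    split; apply sig_eq; assumption. }
  split.
  { split; [| split]; [apply (mulP_regular_semigroup _ (rho_tr H)) .. |].
    intros e f He%val_idem Hf%val_idem.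
    destruct (idem_rho_fixed_right_regular H (proj2_sig e) (proj2_sig f) He Hf).
    split; apply sig_eq; assumption. }
  split; [apply inP_embedding |].
  split; [apply inP_embedding |].
  split; [apply inP_inverse_transversal |].
  split.
  { apply inP_quasi_ideal. intros s x t Hs Hx Ht.
    rewrite (tr_mul_lam_fixed H Hs Hx). auto. }
  split; [apply inP_inverse_transversal |].
  split.
  { apply inP_quasi_ideal. intros s x t Hs Hx Ht.
    rewrite asc, (rho_fixed_mul_tr H Ht Hx). auto. }
  split; [apply oP_inverse |].
  split; [apply oP_inverse |].
  split.
  { intros y z a b Hyb. apply (f_equal (@proj1_sig _ _)) in Hyb.
    apply sig_eq; simpl in *. rewrite Hyb, !asc. reflexivity. }
  split; [intros; apply sig_eq; reflexivity |].
  split; [intros; apply sig_eq; reflexivity |].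
  intros e f He%val_idem Hf%val_idem. apply sig_eq.
  exact (proj2 (idem_rho_lam_mul (proj2_sig e) He (proj2_sig f) Hf)).
Qed.

Lemma lam_rho_iso : iso_onto op (Tmul mulL mulR inL inR oL oR sandwich) (Tset oL oR).
Proof.
  exists lam_rho. split; [split | split].
  - intros a b E. injection E as E1 E2.
    rewrite (lam_o_rho H a), (lam_o_rho H b), <- (o_lam H a), <- (o_lam H b), E1, E2.
    reflexivity.
  - intros a b. unfold Tmul, lam_rho. f_equal; apply sig_eq; simpl.
    + rewrite asc. symmetry. exact (lam_mul_decomp H a b).
    + symmetry. exact (rho_mul_decomp H a b).
  - intros a. apply sig_eq; simpl. rewrite (o_lam H), (o_rho H). reflexivity.
  - intros [l r] E. apply (f_equal (@proj1_sig _ _)) in E. simpl in E.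
    destruct (lam_rho_mul_o (proj2_sig l) (proj2_sig r) E) as [El Er].
    exists (proj1_sig l ** (o (proj1_sig l) ** proj1_sig r)).
    unfold lam_rho. f_equal; apply sig_eq; assumption.
Qed.
End Construction.

Lemma mult_inverse_transversal_of (S : Type) (op : S -> S -> S) (S0 : S -> Prop) :
  semigroup_on op (full (X:=S)) -> inverse_transversal_on op (full (X:=S)) S0 ->
  multiplicative_on op (full (X:=S)) S0 -> exists o, mult_inverse_transversal op S0 o.
Proof.
  intros [_ Has] [_ [[[Hcl _] _] Hu]] Hm.
  assert (asc : forall x y z, op (op x y) z = op x (op y z)) by (intros; apply Has; exact I).
  destruct (choice (fun x y => S0 y /\ inverse_of op x y)) as [o Ho].
  { intro x. destruct (Hu x I) as [y [Hy _]]. eauto. }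
  exists o.
  assert (ol : forall x, op x (op (o x) x) = x) by (intro x; rewrite <- asc; apply (Ho x)).
  assert (or : forall x, op (o x) (op x (o x)) = o x) by (intro x; rewrite <- asc; apply (Ho x)).
  assert (Hmo := fun x y => Hm x y (o x) (o y) I I (proj1 (Ho x)) (proj1 (Ho y))
                                (proj2 (Ho x)) (proj2 (Ho y))).
  split; auto.
  - intros x; apply (Ho x).
  - intros x y Hy H1 H2. destruct (Hu x I) as [z [_ Uz]].
    rewrite <- (Uz y), <- (Uz (o x)); auto.
    split; [exact Hy | split; rewrite asc; auto].
  - intros x y. destruct (Hmo x y) as [E _]. rewrite !asc in E. exact E.
  - intros x y. destruct (Hmo x y) as [_ E]. unfold idem in E.
    rewrite !asc in E. rewrite !asc. exact E.
Qed.

Lemma regular_mit_is_construction (S : Type) (opS : S -> S -> S) (S0 : S -> Prop) :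
  semigroup_on opS (full (X:=S)) -> inverse_transversal_on opS (full (X:=S)) S0 ->
  multiplicative_on opS (full (X:=S)) S0 ->
  exists (L R Z : Type) (opL : L -> L -> L) (opR : R -> R -> R)
    (opZ : Z -> Z -> Z) (iL : Z -> L) (iR : Z -> R) (zL : L -> Z)
    (zR : R -> Z) (star : R -> L -> Z),
    construction_data opL opR opZ iL iR zL zR star /\
    iso_onto opS (Tmul opL opR iL iR zL zR star) (Tset zL zR).
Proof.
  intros Hs Ht Hm. destruct (mult_inverse_transversal_of Hs Ht Hm) as [o H].
  do 11 eexists. exact (conj (construction_data_of_mit H) (lam_rho_iso H)).
Qed.

(* One half of the construction data: [iL] embeds the inverse semigroup [Z] as a
   quasi-ideal inverse transversal of [L], whose idempotents form a left regular
   band, and [zL x] is x^0. The right half is this record for the opposite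
   semigroups of [Z] and [R]. *)
Record transversal_side (Z L : Type) (opZ : Z -> Z -> Z) (inv : Z -> Z)
  (opL : L -> L -> L) (iL : Z -> L) (zL : L -> Z) : Prop := {
  side_inverse : inverse_subsemigroup opZ (full (X:=Z)) inv;
  side_mulA : forall x y z, opL (opL x y) z = opL x (opL y z);
  side_left_regular : forall e f, opL e e = e -> opL f f = f ->
    opL (opL e f) (opL e f) = opL e f /\ opL (opL e f) e = opL e f;
  side_iL_mul : forall s t, iL (opZ s t) = opL (iL s) (iL t);
  side_iL_inj : forall s t, iL s = iL t -> s = t;
  side_zL_l : forall x, opL x (opL (iL (zL x)) x) = x;
  side_zL_r : forall x, opL (iL (zL x)) (opL x (iL (zL x))) = iL (zL x);
  side_zL_uniq : forall x t, opL x (opL (iL t) x) = x ->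
    opL (iL t) (opL x (iL t)) = iL t -> t = zL x;
  side_quasi_ideal : forall s x t, exists u, opL (iL s) (opL x (iL t)) = iL u }.

Section Side.
Variables (Z L : Type) (opZ : Z -> Z -> Z) (inv : Z -> Z) (opL : L -> L -> L)
  (iL : Z -> L) (zL : L -> Z).
Hypothesis H : transversal_side opZ inv opL iL zL.
Local Infix "⋅" := opZ (at level 40, left associativity).
Local Infix "**" := opL (at level 40, left associativity).
Let HZ := side_inverse H.
Let ascZ := isg_mulA HZ.
Let Zl s : s ⋅ (inv s ⋅ s) = s := isg_inv_l HZ (x:=s) I.
Let Zr s : inv s ⋅ (s ⋅ inv s) = inv s := isg_inv_r HZ (x:=s) I.
Let ascL := side_mulA H.
Let iLh := side_iL_mul H.
Let iLi := side_iL_inj H.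
Let zl := side_zL_l H.
Let zr := side_zL_r H.
Let zu := side_zL_uniq H.

Lemma zL_iL t : zL (iL t) = inv t.
Proof. symmetry. apply zu; rewrite <- !iLh; [rewrite Zl | rewrite Zr]; reflexivity. Qed.

Lemma iL_zL_mul x : iL (zL x) ** x = iL (zL x ⋅ inv (zL x)).
Proof.
  set (g := zL x). set (e := iL g ** x). set (f := iL (g ⋅ inv g)).
  assert (Hee : e ** e = e) by (unfold e, g; rewrite ascL, zl; reflexivity).
  assert (Hff : f ** f = f)
    by (unfold f; rewrite <- iLh, (idem_mul_inv_r HZ (x:=g) I); reflexivity).
  assert (Eef : e ** f = f).
  { unfold e, f, g. rewrite ascL, iLh, <- (ascL x), <- ascL, zr, <- iLh. reflexivity. }
  assert (Efe : f ** e = e) by (unfold e, f; rewrite <- ascL, <- iLh, ascZ, Zl; reflexivity).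
  destruct (side_left_regular H Hee Hff) as [_ E]. rewrite Eef, Efe in E. exact E.
Qed.

(* The quasi-ideal property puts [t x x^0] in [S^0]; the left regular band of
   idempotents of [L] then pins it down. *)
Lemma iL_mul t x : iL t ** x = iL (t ⋅ inv (zL x)).
Proof.
  set (g := zL x). set (h := inv g ⋅ g).
  assert (Ih : h ⋅ h = h) by apply (idem_inv_mul_r HZ (x:=g) I).
  assert (Ii : (x ** iL g) ** (x ** iL g) = x ** iL g).
  { unfold g. rewrite !ascL, <- (ascL (iL _) x), <- (ascL x), zl. reflexivity. }
  assert (ih : (x ** iL g) ** iL h = x ** iL g)
    by (unfold h; rewrite ascL, <- iLh, Zl; reflexivity).
  assert (hi : iL h ** (x ** iL g) = iL h).
  { unfold h. rewrite iLh, ascL. unfold g. rewrite zr, <- iLh. reflexivity. }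
  assert (Sb : forall f, f ⋅ f = f -> iL f ** (x ** iL g) = iL (f ⋅ h)).
  { intros f Hf. destruct (side_quasi_ideal H f x g) as [k Hk].
    assert (If : iL f ** iL f = iL f) by (rewrite <- iLh, Hf; reflexivity).
    assert (Ik : k ⋅ k = k).
    { apply iLi. rewrite iLh, <- Hk. apply (side_left_regular H If Ii). }
    assert (kh : k ⋅ h = k) by (apply iLi; rewrite iLh, <- Hk, ascL, ih; reflexivity).
    assert (hk : h ⋅ k = f ⋅ h).
    { apply iLi. rewrite iLh, <- Hk, <- ascL, <- iLh, (idem_comm HZ I I Ih Hf).
      rewrite iLh, ascL, hi, <- iLh. reflexivity. }
    rewrite Hk. f_equal. rewrite <- hk, (idem_comm HZ I I Ih Ik). symmetry. exact kh. }
  assert (Sc : iL t ** (x ** iL g) = iL (t ⋅ h)).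
  { rewrite <- (Zl t) at 1. rewrite iLh, ascL, Sb, <- iLh, <- ascZ, Zl; [reflexivity |].
    apply (idem_inv_mul_r HZ (x:=t) I). }
  rewrite <- (zl x) at 1. fold g. rewrite <- (ascL x (iL g) x), <- (ascL (iL t)), Sc.
  unfold h. rewrite <- ascZ, iLh, ascL. unfold g. rewrite iL_zL_mul, <- iLh, !ascZ, Zr. reflexivity.
Qed.

Lemma mul_iL_zL x : x ** iL (zL x ⋅ inv (zL x)) = x.
Proof. rewrite <- iL_zL_mul. apply zl. Qed.

Lemma zL_mul_iL x q : zL (x ** iL (zL x ⋅ q)) = inv (zL x ⋅ q) ⋅ zL x.
Proof.
  set (g := zL x). symmetry. apply zu; rewrite !ascL.
  - rewrite <- (ascL (iL _) (iL _)), <- iLh, <- (ascL (iL _) x), iL_mul. fold g. rewrite <- iLh.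
    f_equal. f_equal. rewrite !ascZ, (inv_l_assoc HZ (x:=g) _ I).
    assert (E := Zl (g ⋅ q)). rewrite !ascZ in E. exact E.
  - rewrite <- (ascL (iL _) x), iL_mul. fold g. rewrite <- !iLh. f_equal.
    rewrite !ascZ, (inv_l_assoc HZ (x:=g) _ I).
    assert (E := inv_r_assoc HZ (x:=g ⋅ q) g I). rewrite !ascZ in E. exact E.
Qed.
End Side.

Section Construction_T.
Variables (L R Z : Type) (opL : L -> L -> L) (opR : R -> R -> R) (opZ : Z -> Z -> Z)
  (iL : Z -> L) (iR : Z -> R) (zL : L -> Z) (zR : R -> Z) (star : R -> L -> Z)
  (inv : Z -> Z).
Local Infix "⋅" := opZ (at level 40, left associativity).
Local Infix "**" := opL (at level 40, left associativity).
Local Infix "%%" := opR (at level 40, left associativity).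
Hypothesis HL : transversal_side opZ inv opL iL zL.
Hypothesis HR : transversal_side (fun s t => t ⋅ s) inv (fun a b => b %% a) iR zR.
Hypothesis star_assoc : forall y z a b, zL y = zR b ->
  star (iR (star a y) %% (iR (zR b) %% b)) z = star a ((y ** iL (zL y)) ** iL (star b z)).
Hypothesis star_tr_l : forall s x, iL (star (iR s) x) = iL s ** x.
Hypothesis star_tr_r : forall a t, iR (star a (iL t)) = a %% iR t.
Hypothesis star_idem : forall e f, e %% e = e -> f ** f = f -> star e f ⋅ star e f = star e f.

Let HZ := side_inverse HL.
Let ascZ := isg_mulA HZ.
Let Zl s : s ⋅ (inv s ⋅ s) = s := isg_inv_l HZ (x:=s) I.
Let Zr s : inv s ⋅ (s ⋅ inv s) = inv s := isg_inv_r HZ (x:=s) I.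
Let Zu s t : s ⋅ (t ⋅ s) = s -> t ⋅ (s ⋅ t) = t -> t = inv s := isg_inv_uniq HZ (x:=s) I I.
Let Zinvinv s : inv (inv s) = s := inv_invol HZ (x:=s) I.
Let Zinvmul s t : inv (s ⋅ t) = inv t ⋅ inv s := inv_mul HZ (x:=s) (y:=t) I I.
Let Zinvidem e : e ⋅ e = e -> inv e = e := inv_idem HZ (e:=e) I.
Let Zidl s : (s ⋅ inv s) ⋅ (s ⋅ inv s) = s ⋅ inv s := idem_mul_inv_r HZ (x:=s) I.
Let Zidr s : (inv s ⋅ s) ⋅ (inv s ⋅ s) = inv s ⋅ s := idem_inv_mul_r HZ (x:=s) I.
Let Zlt s t : s ⋅ (inv s ⋅ (s ⋅ t)) = s ⋅ t := inv_l_assoc HZ (x:=s) t I.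
Let Zrt s t : inv s ⋅ (s ⋅ (inv s ⋅ t)) = inv s ⋅ t := inv_r_assoc HZ (x:=s) t I.
Let ascL := side_mulA HL.
Let iLh := side_iL_mul HL.
Let iLi := side_iL_inj HL.
Let ascR x y z : (x %% y) %% z = x %% (y %% z) := eq_sym (side_mulA HR z y x).
Let iRh s t : iR (s ⋅ t) = iR s %% iR t := side_iL_mul HR t s.
Let iRi := side_iL_inj HR.
Let zR_iR t : zR (iR t) = inv t := zL_iL HR t.
Let mul_iR x t : x %% iR t = iR (inv (zR x) ⋅ t) := iL_mul HR t x.
Let iR_zR_mul x : iR (inv (zR x) ⋅ zR x) %% x = x := mul_iL_zL HR x.
Let zR_iR_mul x q : zR (iR (q ⋅ zR x) %% x) = zR x ⋅ inv (q ⋅ zR x) := zL_mul_iL HR x q.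

Lemma star_iR_iL s t : star (iR s) (iL t) = s ⋅ t.
Proof. apply iLi. rewrite star_tr_l, iLh. reflexivity. Qed.

Lemma star_iR s x : star (iR s) x = s ⋅ inv (zL x).
Proof. apply iLi. rewrite star_tr_l, (iL_mul HL). reflexivity. Qed.

Lemma star_iL a t : star a (iL t) = inv (zR a) ⋅ t.
Proof. apply iRi. rewrite star_tr_r, mul_iR. reflexivity. Qed.

(* Axiom (1) with [y := (b^0)^0] in [S^0]. *)
Lemma star_iR_idem_mul t a z :
  star (iR (t ⋅ (inv (zR a) ⋅ zR a)) %% a) z = t ⋅ (inv (zR a) ⋅ (zR a ⋅ star a z)).
Proof.
  assert (P : zL (iL (inv (zR a))) = zR a) by (rewrite (zL_iL HL), Zinvinv; reflexivity).
  assert (E := star_assoc z (iR t) P).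
  apply (f_equal iL) in E. rewrite star_tr_l, star_iR_iL, (zL_iL HL), Zinvinv in E.
  rewrite <- ascR, <- iRh, ascZ in E. apply iLi. rewrite E, ascL, <- !iLh. reflexivity.
Qed.

Lemma star_absorb_l a z : star a z = inv (zR a) ⋅ (zR a ⋅ star a z).
Proof.
  rewrite <- (iR_zR_mul a) at 1.
  rewrite <- (Zidr (zR a)), star_iR_idem_mul, !ascZ, Zrt. reflexivity.
Qed.

Lemma star_iR_mul t a z : star (iR t %% a) z = t ⋅ star a z.
Proof.
  rewrite <- (iR_zR_mul a) at 1.
  rewrite <- ascR, <- iRh, star_iR_idem_mul, <- star_absorb_l. reflexivity.
Qed.

(* Axiom (1) with [b := (y^0)^0] in [S^0]. *)
Lemma star_mul_iL_idem a y t :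
  star a (y ** iL (zL y ⋅ (inv (zL y) ⋅ t))) = star a y ⋅ (zL y ⋅ (inv (zL y) ⋅ t)).
Proof.
  assert (P : zL y = zR (iR (inv (zL y)))) by (rewrite zR_iR, Zinvinv; reflexivity).
  assert (E := star_assoc (iL t) a P).
  rewrite zR_iR, Zinvinv, <- !iRh, !star_iR_iL, ascL, <- iLh, !ascZ in E. symmetry. exact E.
Qed.

Lemma star_absorb_r a y : star a y = star a y ⋅ (zL y ⋅ inv (zL y)).
Proof.
  rewrite <- (mul_iL_zL HL y) at 1. rewrite <- (Zr (zL y)), star_mul_iL_idem, Zr. reflexivity.
Qed.

Lemma star_mul_iL a y t : star a (y ** iL t) = star a y ⋅ t.
Proof.
  rewrite <- (mul_iL_zL HL y) at 1. rewrite ascL, <- iLh, ascZ, star_mul_iL_idem.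
  rewrite (star_absorb_r a y) at 2. rewrite !ascZ. reflexivity.
Qed.

Local Notation mul := (Tmul opL opR iL iR zL zR star).
Local Notation T := (Tset zL zR).
Definition diag (s : Z) : L * R := (iL s, iR s).

Lemma Tmul_eq x a y b :
  mul (x, a) (y, b) = (x ** iL (zL x ⋅ star a y), iR (star a y ⋅ zR b) %% b).
Proof. unfold Tmul. rewrite ascL, <- iLh, <- ascR, <- iRh. reflexivity. Qed.

Lemma zL_Tmul x a y : zL x = zR a -> zL (x ** iL (zL x ⋅ star a y)) = inv (star a y).
Proof.
  intro Hxa. rewrite (zL_mul_iL HL), Zinvmul, ascZ, Hxa.
  assert (E := f_equal inv (star_absorb_l a y)).
  rewrite <- ascZ, Zinvmul, (Zinvidem (Zidr _)) in E. symmetry. exact E.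
Qed.

Lemma zR_Tmul a y b : zL y = zR b -> zR (iR (star a y ⋅ zR b) %% b) = inv (star a y).
Proof.
  intro Hyb. rewrite zR_iR_mul, Zinvmul, <- ascZ, <- Hyb.
  assert (E := f_equal inv (star_absorb_r a y)).
  rewrite Zinvmul, (Zinvidem (Zidl _)) in E. symmetry. exact E.
Qed.

Lemma Tmul_closed p q : T p -> T q -> T (mul p q).
Proof.
  destruct p as [x a], q as [y b]. intros Hp Hq. unfold Tset in *. simpl in Hp, Hq.
  rewrite Tmul_eq. simpl. rewrite zL_Tmul, zR_Tmul; auto.
Qed.

Lemma Tmul_assoc p q r : T p -> T q -> T r -> mul (mul p q) r = mul p (mul q r).
Proof.
  destruct p as [x a], q as [y b], r as [z c]. intros Hp Hq Hr.
  unfold Tset in *. simpl in Hp, Hq, Hr.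
  rewrite !Tmul_eq, zL_Tmul, zR_Tmul, star_iR_mul, star_mul_iL, Hq; auto.
  f_equal.
  - rewrite ascL, <- iLh, !ascZ, Zlt. reflexivity.
  - rewrite <- ascR, <- iRh, !ascZ, Zlt. reflexivity.
Qed.

Lemma diag_T s : T (diag s).
Proof. unfold Tset, diag; simpl. rewrite (zL_iL HL), zR_iR. reflexivity. Qed.

Lemma diag_mul s t : mul (diag s) (diag t) = diag (s ⋅ t).
Proof.
  unfold diag. rewrite Tmul_eq, (zL_iL HL), zR_iR, star_iR_iL, <- iLh, <- iRh, Zlt, !ascZ, Zl.
  reflexivity.
Qed.

Lemma Tmul_diag_r x a s : zL x = zR a ->
  mul (x, a) (diag s) = (x ** iL (zL x ⋅ (inv (zL x) ⋅ s)), iR (inv (zL x) ⋅ s)).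
Proof.
  intro E. unfold diag. rewrite Tmul_eq, star_iL, zR_iR, <- iRh, E, !ascZ, Zl. reflexivity.
Qed.

Lemma Tmul_diag_l x a s : zL x = zR a ->
  mul (diag s) (x, a) = (iL (s ⋅ inv (zL x)), iR (s ⋅ (inv (zL x) ⋅ zL x)) %% a).
Proof.
  intro E. unfold diag. rewrite Tmul_eq, star_iR, (zL_iL HL), <- iLh, Zlt, E, ascZ. reflexivity.
Qed.

Lemma diag_zL_inverse x a : zL x = zR a -> inverse_of mul (x, a) (diag (zL x)).
Proof.
  intro E. set (g := zL x). split.
  - rewrite Tmul_diag_r; auto. fold g. rewrite Zl, Tmul_eq.
    assert (Ez : zL (x ** iL g) = inv g ⋅ g).
    { rewrite <- (Zl g) at 1. unfold g. rewrite (zL_mul_iL HL). fold g. rewrite Zl. reflexivity. }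
    rewrite Ez, star_iR. fold g. f_equal.
    + rewrite ascL, <- iLh, !ascZ, !Zlt. apply (mul_iL_zL HL).
    + rewrite !ascZ, Zrt. unfold g. rewrite E. apply iR_zR_mul.
  - rewrite Tmul_diag_l; auto. fold g. rewrite Zl. unfold diag.
    rewrite Tmul_eq, (zL_iL HL), star_iR_mul, star_iL, zR_iR, <- E. fold g.
    rewrite (Zinvidem (Zidl g)), Zl, <- iLh, <- iRh.
    f_equal; f_equal; rewrite !ascZ, ?Zlt; apply Zl.
Qed.

Lemma diag_inverse_uniq x a s : zL x = zR a -> inverse_of mul (x, a) (diag s) -> s = zL x.
Proof.
  intros E [HA HB]. set (g := zL x).
  rewrite Tmul_diag_r, Tmul_eq in HA; auto. apply (f_equal snd) in HA. simpl in HA.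
  rewrite star_iR in HA. fold g in HA.
  apply (f_equal (fun r => r %% iR g)) in HA. rewrite ascR in HA.
  unfold g in HA. rewrite E, (mul_iR a (zR a)), <- iRh in HA.
  apply iRi in HA. rewrite <- E in HA. fold g in HA. rewrite !ascZ, Zrt in HA.
  apply (f_equal (fun z => z ⋅ inv g)) in HA. rewrite !ascZ, (Zr g) in HA.
  rewrite Tmul_diag_l in HB; auto. unfold diag in HB. rewrite Tmul_eq in HB.
  apply (f_equal fst) in HB. simpl in HB.
  rewrite (zL_iL HL), star_iR_mul, star_iL, <- iLh in HB. apply iLi in HB.
  rewrite <- E in HB. fold g in HB.
  assert (E' := Zlt (s ⋅ inv g) (g ⋅ (inv g ⋅ s))).
  rewrite !ascZ in E'. rewrite !ascZ in HB. rewrite E', Zrt in HB.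
  rewrite (Zu HA HB). apply Zinvinv.
Qed.

(* [(x,a)^0 (x,a) (y,b) (y,b)^0] is the image of [x^0 (a*y) y^0], an idempotent by axiom (3). *)
Lemma diag_multiplicative x a y b : zL x = zR a -> zL y = zR b ->
  let k := zL x ⋅ (star a y ⋅ zL y) in
  mul (mul (diag (zL x)) (x, a)) (mul (y, b) (diag (zL y))) = diag k /\ k ⋅ k = k.
Proof.
  intros Ha Hb k. set (g := zL x) in k |- *. set (h := zL y) in k |- *.
  split.
  - rewrite Tmul_diag_l, Tmul_diag_r; auto. fold g h. rewrite (Zl g), (Zl h). unfold diag, k.
    rewrite Tmul_eq, (zL_iL HL), zR_iR, star_iR_mul, star_mul_iL.
    rewrite (Zinvidem (Zidl g)), (Zinvidem (Zidr h)), <- iLh, <- iRh.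
    f_equal; f_equal; rewrite !ascZ.
    + rewrite !Zlt. reflexivity.
    + rewrite Zlt, Zl. reflexivity.
  - assert (Ie : (iR g %% a) %% (iR g %% a) = iR g %% a).
    { unfold g. rewrite Ha, !ascR, <- (ascR a), mul_iR, iR_zR_mul. reflexivity. }
    assert (If : (y ** iL h) ** (y ** iL h) = y ** iL h).
    { rewrite !ascL, <- (ascL (iL h)), (iL_mul HL). fold h. rewrite <- iLh, ascZ, Zl. reflexivity. }
    assert (E := star_idem Ie If). rewrite star_iR_mul, star_mul_iL in E.
    unfold k. rewrite !ascZ in E |- *. exact E.
Qed.

Lemma T_regular_multiplicative : semigroup_on mul T /\ regular_on mul T /\
  exists T0 : L * R -> Prop,
    inverse_transversal_on mul T T0 /\ multiplicative_on mul T T0 /\ iso_onto opZ mul T0.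
Proof.
  split; [split; [exact Tmul_closed | exact Tmul_assoc] |].
  split.
  { intros [x a] Hp. exists (diag (zL x)).
    split; [apply diag_T | exact (proj1 (diag_zL_inverse Hp))]. }
  exists (img diag).
  split; [| split].
  - split; [| split; [split; [split |] |]].
    + intros p [s <-]; apply diag_T.
    + intros p q [s <-] [t <-]; exists (s ⋅ t); symmetry; apply diag_mul.
    + intros p q r [s <-] [t <-] [u <-]; rewrite !diag_mul, ascZ; reflexivity.
    + intros p [s <-]. exists (diag (inv s)). split.
      * split; [exists (inv s); reflexivity |].
        split; rewrite !diag_mul; f_equal; rewrite ascZ; auto.
      * intros q [[t <-] [HA HB]]. rewrite !diag_mul in HA, HB. unfold diag in HA, HB.
        injection HA as HA _. injection HB as HB _. apply iLi in HA. apply iLi in HB.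
        rewrite ascZ in HA, HB. rewrite (Zu HA HB). reflexivity.
    + intros [x a] Hp. exists (diag (zL x)). split.
      * split; [exists (zL x); reflexivity | exact (diag_zL_inverse Hp)].
      * intros q [[s <-] Hi]. rewrite (diag_inverse_uniq Hp Hi). reflexivity.
  - intros [x a] [y b] p0 q0 Hp Hq [s <-] [t <-] Hi1 Hi2. unfold Tset in Hp, Hq; simpl in Hp, Hq.
    rewrite (diag_inverse_uniq Hp Hi1), (diag_inverse_uniq Hq Hi2).
    destruct (diag_multiplicative Hp Hq) as [M1 M2]. rewrite M1.
    split; [eexists; reflexivity | unfold idem; rewrite diag_mul, M2; reflexivity].
  - exists diag. split; [split | split].
    + intros s t E. injection E as E _. apply iLi, E.
    + intros s t. symmetry. apply diag_mul.
    + intros s. exists s. reflexivity.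
    + intros p [s <-]. exists s. reflexivity.
Qed.
End Construction_T.

Section Opposite.
Variables (X : Type) (op : X -> X -> X).
Hypothesis asc : forall x y z, op (op x y) z = op x (op y z).
Local Notation op' := (fun x y => op y x).

Lemma inverse_of_dual x y : inverse_of op' x y <-> inverse_of op x y.
Proof. unfold inverse_of. rewrite !asc. tauto. Qed.

Lemma inverse_subsemigroup_dual (C : X -> Prop) inv :
  inverse_subsemigroup op C inv -> inverse_subsemigroup op' C inv.
Proof.
  intros [_ Ccl invC invl invr invu].
  split; intros; rewrite ?asc; auto.
  rewrite asc in *. apply invu; auto.
Qed.

Lemma inverse_semigroup_inv :
  inverse_sg_on op (full (X:=X)) -> exists inv, inverse_subsemigroup op (full (X:=X)) inv.
Proof.
  intros [_ Hu].
  destruct (choice (fun x y => inverse_of op x y)) as [inv Hinv].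
  { intro x. destruct (Hu x I) as [y [[_ Hy] _]]. eauto. }
  exists inv. split; try exact I; auto.
  - intros x _; rewrite <- asc; apply Hinv.
  - intros x _; rewrite <- asc; apply Hinv.
  - intros x y _ _ H1 H2. destruct (Hu x I) as [z [_ Uz]].
    rewrite <- (Uz y), <- (Uz (inv x)); [reflexivity | split; [exact I | apply Hinv] |].
    split; [exact I | split; rewrite asc; assumption].
Qed.

Lemma transversal_side_of (Z : Type) (opZ : Z -> Z -> Z) inv (iX : Z -> X) zX :
  inverse_subsemigroup opZ (full (X:=Z)) inv ->
  (forall e f, idem op e -> idem op f -> idem op (op e f) /\ op (op e f) e = op e f) ->
  embedding opZ op iX ->
  (forall x, exists! y, img iX y /\ inverse_of op x y) ->
  (forall s x t, img iX (op (op (iX s) x) (iX t))) ->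
  (forall x, inverse_of op x (iX (zX x))) ->
  transversal_side opZ inv op iX zX.
Proof.
  intros HZ LRB [iXi iXh] Hu Hq Hz.
  split; auto.
  - intros x; rewrite <- asc; apply Hz.
  - intros x; rewrite <- asc; apply Hz.
  - intros x t H1 H2. apply iXi. destruct (Hu x) as [y [_ Uy]].
    rewrite <- (Uy (iX t)), <- (Uy (iX (zX x)));
      [reflexivity | split; [eexists; reflexivity | apply Hz] |].
    split; [eexists; reflexivity | split; rewrite asc; assumption].
  - intros s x t. destruct (Hq s x t) as [u Hu']. exists u. rewrite Hu', asc. reflexivity.
Qed.
End Opposite.

Lemma construction_sides (L R Z : Type) (opL : L -> L -> L) (opR : R -> R -> R)
  (opZ : Z -> Z -> Z) (iL : Z -> L) (iR : Z -> R) (zL : L -> Z) (zR : R -> Z)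
  (star : R -> L -> Z) :
  construction_data opL opR opZ iL iR zL zR star ->
  exists inv, transversal_side opZ inv opL iL zL /\
    transversal_side (fun s t => opZ t s) inv (fun a b => opR b a) iR zR.
Proof.
  intros (HZ & [[_ HaL] [_ LRB]] & [[_ HaR] [_ RRB]] & [iLi iLh] & [iRi iRh] & [_ [_ ITL]] & QL
          & [_ [_ ITR]] & QR & zLi & zRi & _).
  assert (ascZ : forall x y z, opZ (opZ x y) z = opZ x (opZ y z)) by (intros; apply HZ; exact I).
  assert (ascL : forall x y z, opL (opL x y) z = opL x (opL y z)) by (intros; apply HaL; exact I).
  assert (ascR : forall x y z, opR (opR x y) z = opR x (opR y z)) by (intros; apply HaR; exact I).
  destruct (inverse_semigroup_inv ascZ HZ) as [inv Hinv].
  exists inv. split.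
  - apply transversal_side_of; auto.
    + split; auto.
    + intros x. apply ITL. exact I.
    + intros s x t. apply QL; [eexists; reflexivity | exact I | eexists; reflexivity].
  - apply transversal_side_of.
    + intros; symmetry; apply ascR.
    + apply inverse_subsemigroup_dual; auto.
    + intros e f He Hf. destruct (RRB f e Hf He) as [Ife _]. split; [exact Ife |].
      rewrite <- ascR. apply RRB; auto.
    + split; [exact iRi | intros; apply iRh].
    + intros x. destruct (ITR x I) as [y [[Iy Hy] Uy]]. exists y.
      split; [split; [exact Iy | apply inverse_of_dual; auto] |].
      intros y' [Iy' Hy']. apply Uy. split; [exact Iy' | apply (inverse_of_dual ascR); exact Hy'].
    + intros s x t. simpl. rewrite <- ascR.
      apply QR; [eexists; reflexivity | exact I | eexists; reflexivity].
    + intros x. apply (inverse_of_dual ascR). apply zRi.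
Qed.

Lemma construction_regular_mult_transversal (L R Z : Type) (opL : L -> L -> L)
  (opR : R -> R -> R) (opZ : Z -> Z -> Z) (iL : Z -> L) (iR : Z -> R) (zL : L -> Z)
  (zR : R -> Z) (star : R -> L -> Z) :
  construction_data opL opR opZ iL iR zL zR star ->
  let T := Tset zL zR in
  let mul := Tmul opL opR iL iR zL zR star in
  semigroup_on mul T /\ regular_on mul T /\
  exists T0 : L * R -> Prop,
    inverse_transversal_on mul T T0 /\ multiplicative_on mul T T0 /\ iso_onto opZ mul T0.
Proof.
  intros CD T mul.
  destruct (construction_sides CD) as [inv [HL HR]].
  destruct CD as (_ & _ & _ & _ & _ & _ & _ & _ & _ & _ & _ & H1 & H2a & H2b & H3).
  exact (T_regular_multiplicative HL HR H1 H2a H2b H3).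
Qed.

Theorem theorem4p4 :
  (forall (L R Z : Type) (opL : L -> L -> L) (opR : R -> R -> R)
     (opZ : Z -> Z -> Z) (iL : Z -> L) (iR : Z -> R) (zL : L -> Z)
     (zR : R -> Z) (star : R -> L -> Z),
   construction_data opL opR opZ iL iR zL zR star ->
   let T := Tset zL zR in
   let mul := Tmul opL opR iL iR zL zR star in
   semigroup_on mul T /\ regular_on mul T /\
   exists T0 : L * R -> Prop,
     inverse_transversal_on mul T T0 /\ multiplicative_on mul T T0 /\
     iso_onto opZ mul T0)
  /\
  (forall (S : Type) (opS : S -> S -> S) (S0 : S -> Prop),
   semigroup_on opS (full (X:=S)) -> regular_on opS (full (X:=S)) ->
   inverse_transversal_on opS (full (X:=S)) S0 ->
   multiplicative_on opS (full (X:=S)) S0 ->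
   exists (L R Z : Type) (opL : L -> L -> L) (opR : R -> R -> R)
     (opZ : Z -> Z -> Z) (iL : Z -> L) (iR : Z -> R) (zL : L -> Z)
     (zR : R -> Z) (star : R -> L -> Z),
     construction_data opL opR opZ iL iR zL zR star /\
     iso_onto opS (Tmul opL opR iL iR zL zR star) (Tset zL zR)).
Proof.
  split.
  - exact construction_regular_mult_transversal.
  - intros S opS S0 Hs _. exact (regular_mit_is_construction Hs).
Qed.
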